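(* Let $n\ge 3$, let $w$ be the solution of \[ w''+\frac{n-1}{t}w'+e^{w}=0,\qquad w(0)=0,\quad w'(0)=0 \qquad (t>0), \] and let $w_0(t)=\ln(2n-4)-2\ln t$. Set $\lambda(t)=t^2e^{w(t)}$. (i) If $w$ and $w_0$ intersect infinitely many times on $(0,\infty)$, then the solution curve of the Gelfand problem makes infinitely many turns, i.e. $\lambda'(t)$ changes sign infinitely many times on $(0,\infty)$. (ii) Suppose $w$ and $w_0$ intersect only finitely many times, and $T$ is a point after the last intersection such that $(w-w_0)'(t)$ is of one sign for $t>T$. Then $\lambda(t)$ is monotone for $t>T$.
   Context: The Gelfand problem is $u''+\frac{n-1}{r}u'+\lambda e^u=0$ for $0<r<1$, $u'(0)=u(1)=0$. The solution $w$ is defined for all $t>0$. The function $w_0$ also solves the differential equation satisfied by $w$. The solution curve of the Gelfand problem is $t\mapsto(\lambda,u(0))=(t^2e^{w(t)},-w(t))$, $t\in(0,\infty)$; for each $t$, $u(r)=w(tr)-w(t)$ is the solution at $\lambda=\lambda(t)$. A turn is a change of sign of $\lambda'(t)$. *)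

From Stdlib Require Import Reals Lra List.
From Coquelicot Require Import Coquelicot.
Open Scope R_scope.

Definition w0 (n : nat) (t : R) : R := ln (2 * INR n - 4) - 2 * ln t.

Definition lam (w : R -> R) (t : R) : R := t ^ 2 * exp (w t).

(* w solves  w'' + (n-1)/t w' + e^w = 0 on (0,oo), w(0) = 0, w'(0) = 0
   (w'(0) taken as the right derivative at 0, since the problem lives on [0,oo)). *)
Definition gelfand_solution (n : nat) (w : R -> R) : Prop :=
  w 0 = 0 /\
  filterlim (fun h => (w h - w 0) / h) (at_right 0) (locally 0) /\
  (forall t, 0 < t -> ex_derive w t /\ ex_derive (Derive w) t) /\
  (forall t, 0 < t ->
     Derive (Derive w) t + (INR n - 1) / t * Derive w t + exp (w t) = 0).

Definition intersections (n : nat) (w : R -> R) (t : R) : Prop :=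
  0 < t /\ w t = w0 n t.

Definition finite_set (S : R -> Prop) : Prop :=
  exists l : list R, forall t, S t -> In t l.

(* Put phi = w - w0, so that lam' = lam phi' with lam > 0.  With c = 2n-4,
   the energy t^(2n-2) (phi'^2/2 + e^w - c/t^2 - c phi/t^2) has derivative
   2(n-2) t^(2n-3) (c/t^2)(e^phi - 1 - phi) >= 0, and this potential part is
   positive wherever phi <> 0.  At a double zero a of phi the energy vanishes,
   so it is <= 0 on (0,a]; but phi < 0 near 0 (w(0) = 0 while w0 -> +oo).
   Hence all zeros of phi are simple and isolated, so finitely many lie in any
   (0,b].  If lam' had one sign on (T,oo), phi would be monotone there and,
   its zeros being isolated, could vanish at most once: the intersections
   would be finite.  Part (ii) is the same sign relation read backwards. *)

From Stdlib Require Import Reals Lra Lia List Classical.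
From Coquelicot Require Import Coquelicot.
Open Scope R_scope.

Definition monotone_after (T : R) (f : R -> R) : Prop :=
  (forall s t, T < s -> s <= t -> f s <= f t) \/
  (forall s t, T < s -> s <= t -> f t <= f s).

Definition isolated_in (S : R -> Prop) (x : R) : Prop :=
  exists eps, 0 < eps /\ forall y, Rabs (y - x) < eps -> S y -> y = x.

Lemma nondecreasing_after_of_derive_nonneg (f df : R -> R) (T : R) :
  (forall x, T < x -> is_derive f x (df x)) -> (forall x, T < x -> 0 <= df x) ->
  forall s t, T < s -> s <= t -> f s <= f t.
Proof.
  intros Hd Hpos s t Hs Hst.
  destruct (MVT_gen f s t df) as [c [Hc Heq]];
    rewrite ?Rmin_left, ?Rmax_right in * by lra.
  - intros x Hx. apply Hd. lra.
  - intros x Hx. apply continuity_pt_filterlim.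
    apply (ex_derive_continuous (K := R_AbsRing) (V := R_NormedModule)).
    exists (df x). apply Hd. lra.
  - pose proof (Hpos c ltac:(lra)). nra.
Qed.

Lemma monotone_after_of_derive_sign (f df : R -> R) (T : R) :
  (forall x, T < x -> is_derive f x (df x)) ->
  (forall x, T < x -> 0 <= df x) \/ (forall x, T < x -> df x <= 0) ->
  monotone_after T f.
Proof.
  intros Hd [Hpos | Hneg]; [left | right].
  - exact (nondecreasing_after_of_derive_nonneg f df T Hd Hpos).
  - intros s t Hs Hst.
    enough (- f s <= - f t) by lra.
    apply (nondecreasing_after_of_derive_nonneg (fun x => - f x) (fun x => - df x) T);
      [| intros x Hx; specialize (Hneg x Hx); lra | exact Hs | exact Hst].
    intros x Hx. apply (is_derive_opp (K := R_AbsRing) (V := R_NormedModule)), Hd, Hx.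
Qed.

Lemma is_derive_isolated_zero (f : R -> R) (x l : R) :
  is_derive f x l -> (f x = 0 -> l <> 0) -> isolated_in (fun y => f y = 0) x.
Proof.
  intros Hd Hsimple. destruct (Req_dec (f x) 0) as [Hx | Hx].
  - specialize (Hsimple Hx). apply is_derive_Reals in Hd.
    destruct (Hd (Rabs l) (Rabs_pos_lt l Hsimple)) as [delta Hdelta].
    exists delta. split; [apply cond_pos |]. intros y Hy Hfy.
    destruct (Req_dec y x) as [| Hne]; [assumption | exfalso].
    specialize (Hdelta (y - x) ltac:(lra) Hy).
    replace (x + (y - x)) with y in Hdelta by ring.
    rewrite Hfy, Hx in Hdelta. unfold Rdiv in Hdelta.
    rewrite Rminus_0_r, Rmult_0_l, Rminus_0_l, Rabs_Ropp in Hdelta. lra.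
  - assert (Hc : continuity_pt f x).
    { apply derivable_continuous_pt. exists l. apply is_derive_Reals, Hd. }
    destruct (Hc (Rabs (f x)) (Rabs_pos_lt _ Hx)) as [delta [Hdelta Hnear]].
    exists delta. split; [exact Hdelta |]. intros y Hy Hfy.
    destruct (Req_dec y x) as [| Hne]; [assumption | exfalso].
    specialize (Hnear y (conj (conj I (not_eq_sym Hne)) Hy)).
    rewrite Hfy in Hnear. simpl in Hnear. unfold R_dist in Hnear.
    rewrite Rminus_0_l, Rabs_Ropp in Hnear. lra.
Qed.

Lemma finite_below_of_isolated (S : R -> Prop) (d : R) :
  (forall y, S y -> d <= y) -> (forall x, d <= x -> isolated_in S x) ->
  forall b, exists l, forall y, S y -> y <= b -> In y l.
Proof.
  intros Hlow Hiso.
  set (P := fun b => exists l, forall y, S y -> y <= b -> In y l).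
  assert (HPanti : forall a b, a <= b -> P b -> P a).
  { intros a b Hab [l Hl]. exists l. intros y Hy Hya. apply Hl; [exact Hy | lra]. }
  assert (HPd : P d).
  { exists (d :: nil). intros y Hy Hyd. left. pose proof (Hlow y Hy). lra. }
  intros b. apply NNPP. intros Hb. fold (P b) in Hb.
  assert (Hbound : bound P).
  { exists b. intros x Hx. apply Rnot_lt_le. intros Hbx.
    apply Hb, (HPanti b x); [lra | exact Hx]. }
  destruct (completeness P Hbound (ex_intro _ d HPd)) as [s [Hub Hlub]].
  pose proof (Hub d HPd) as Hds.
  destruct (Hiso s Hds) as [eps [Heps Hs]].
  assert (Hx : exists x, P x /\ s - eps < x).
  { apply NNPP. intros Hno.
    enough (s <= s - eps) by lra.
    apply Hlub. intros x Hx. apply Rnot_lt_le. intros Hlt. apply Hno. exists x. auto. }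
  destruct Hx as [x [[l Hl] Hx]].
  assert (Hxs : x <= s) by (apply Hub; exists l; exact Hl).
  enough (s + eps / 2 <= s) by lra.
  apply Hub. exists (s :: l). intros y Hy Hys.
  destruct (Rle_dec y x) as [Hyx | Hyx].
  - right. apply Hl; assumption.
  - left. symmetry. apply (Hs y); [apply Rabs_def1; lra | exact Hy].
Qed.

Lemma monotone_after_isolated_zeros_finite (f : R -> R) (T : R) :
  monotone_after T f -> (forall x, T < x -> isolated_in (fun y => f y = 0) x) ->
  exists l, forall y, T < y -> f y = 0 -> In y l.
Proof.
  intros Hmono Hiso.
  assert (Hnot2 : forall a b, T < a -> a < b -> f a = 0 -> f b = 0 -> False).
  { intros a b Ha Hab Hfa Hfb.
    assert (Hflat : forall y, a <= y <= b -> f y = 0).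
    { intros y Hy. destruct Hmono as [M | M];
        pose proof (M a y Ha (proj1 Hy)); pose proof (M y b ltac:(lra) (proj2 Hy)); lra. }
    destruct (Hiso a Ha) as [eps [Heps Hzero]].
    set (y := a + Rmin eps (b - a) / 2).
    assert (Hmin : 0 < Rmin eps (b - a) <= b - a /\ Rmin eps (b - a) <= eps).
    { split; [split; [apply Rmin_glb_lt | apply Rmin_r] | apply Rmin_l]; lra. }
    assert (y = a) by (apply Hzero; [unfold y; apply Rabs_def1 | apply Hflat; unfold y]; lra).
    unfold y in *. lra. }
  destruct (classic (exists z, T < z /\ f z = 0)) as [[z [Hz Hfz]] | Hnone].
  - exists (z :: nil). intros y Hy Hfy. left.
    destruct (Rtotal_order z y) as [Hlt | [Heq | Hgt]]; [exfalso | exact Heq | exfalso].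
    + exact (Hnot2 z y Hz Hlt Hfz Hfy).
    + exact (Hnot2 y z Hy Hgt Hfy Hfz).
  - exists nil. intros y Hy Hfy. apply Hnone. exists y. auto.
Qed.

Lemma one_sign_of_no_sign_change (g : R -> R) (T : R) :
  ~ (exists s1 s2, T < s1 /\ T < s2 /\ g s1 < 0 /\ 0 < g s2) ->
  (forall s, T < s -> 0 <= g s) \/ (forall s, T < s -> g s <= 0).
Proof.
  intros Hno. destruct (classic (exists s, T < s /\ g s < 0)) as [[s1 [Hs1 Hg1]] | Hnone].
  - right. intros s Hs. apply Rnot_lt_le. intros Hg. apply Hno. exists s1, s. auto.
  - left. intros s Hs. apply Rnot_lt_le. intros Hg. apply Hnone. exists s. auto.
Qed.

Section Gelfand.

Variables (n : nat) (w : R -> R).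
Hypothesis n_ge3 : (3 <= n)%nat.
Hypothesis w_sol : gelfand_solution n w.

Let c := 2 * INR n - 4.

Definition phi (t : R) : R := w t - w0 n t.

Definition dphi (t : R) : R := Derive w t + 2 / t.

Definition potential (t : R) : R := exp (w t) - c / t ^ 2 - c * phi t / t ^ 2.

Definition energy (t : R) : R := t ^ (2 * n - 2) * (dphi t ^ 2 / 2 + potential t).

Lemma c_pos : 0 < c.
Proof. apply le_INR in n_ge3. unfold c. simpl in n_ge3. lra. Qed.

Lemma w_derivable t : 0 < t -> ex_derive w t.
Proof. intros Ht. destruct w_sol as [_ [_ [Hd _]]]. apply Hd, Ht. Qed.

Lemma is_derive_phi t : 0 < t -> is_derive phi t (dphi t).
Proof.
  intros Ht. pose proof (w_derivable t Ht). unfold phi, w0, dphi.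
  auto_derive; [auto |]. change (fun x => w x) with w. field. lra.
Qed.

Lemma is_derive_lam t : 0 < t -> is_derive (lam w) t (lam w t * dphi t).
Proof.
  intros Ht. pose proof (w_derivable t Ht). unfold lam, dphi.
  auto_derive; [auto |]. change (fun x => w x) with w. field. lra.
Qed.

Lemma lam_pos t : 0 < t -> 0 < lam w t.
Proof. intros Ht. apply Rmult_lt_0_compat; [apply pow_lt, Ht | apply exp_pos]. Qed.

Lemma potential_eq t : 0 < t -> potential t = c / t ^ 2 * (exp (phi t) - 1 - phi t).
Proof.
  intros Ht. pose proof c_pos.
  assert (Hexp : exp (w t) = c / t ^ 2 * exp (phi t)).
  { unfold phi, w0. fold c.
    replace (w t - (ln c - 2 * ln t)) with (w t + (ln t + ln t) + - ln c) by ring.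
    rewrite !exp_plus, exp_Ropp, !exp_ln by assumption. field. lra. }
  unfold potential. rewrite Hexp. field. lra.
Qed.

Lemma potential_nonneg t : 0 < t -> 0 <= potential t.
Proof.
  intros Ht. rewrite potential_eq by exact Ht.
  pose proof (exp_ineq1_le (phi t)). pose proof c_pos.
  apply Rmult_le_pos; [apply Rlt_le, Rdiv_lt_0_compat; nra | lra].
Qed.

Lemma potential_pos t : 0 < t -> phi t <> 0 -> 0 < potential t.
Proof.
  intros Ht Hphi. rewrite potential_eq by exact Ht.
  pose proof (exp_ineq1 (phi t) Hphi). pose proof c_pos.
  apply Rmult_lt_0_compat; [apply Rdiv_lt_0_compat; nra | lra].
Qed.

Lemma is_derive_energy t : 0 < t ->
  is_derive energy t (2 * (INR n - 2) * t ^ (2 * n - 3) * potential t).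
Proof.
  intros Ht. destruct w_sol as [_ [_ [Hd Hode]]]. destruct (Hd t Ht) as [H1 H2].
  assert (Hw'' : Derive (Derive w) t = - ((INR n - 1) / t * Derive w t) - exp (w t))
    by (specialize (Hode t Ht); lra).
  unfold energy, potential, phi, w0, dphi, c. auto_derive.
  - repeat split; auto; nra.
  - change (fun x => w x) with w. change (fun x => Derive w x) with (Derive w).
    rewrite Hw''. clear - Ht n_ge3.
    (* Writing n = m + 3 makes the nat exponents 2n-2 and 2n-3 concrete. *)
    destruct n as [|[|[|m]]]; try lia.
    replace (S (S (S m)) + (S (S (S m)) + 0) - 2)%nat with (S (2 * m + 3)) by lia.
    replace (2 * S (S (S m)) - 3)%nat with (2 * m + 3)%nat by lia.
    replace (INR (S (2 * m + 3))) with (2 * INR m + 4)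
      by (rewrite S_INR, plus_INR, mult_INR; simpl; lra).
    replace (INR (S (S (S m)))) with (INR m + 3) by (rewrite !S_INR; lra).
    simpl pred. simpl pow. set (X := t ^ (2 * m + 3)). field. lra.
Qed.

Lemma w_lt_w0_near_0 : exists d, 0 < d /\ forall t, 0 < t < d -> w t < w0 n t.
Proof.
  destruct w_sol as [Hw0 [Hlim _]]. rewrite Hw0 in Hlim.
  destruct (proj1 (filterlim_locally _ _) Hlim (mkposreal 1 Rlt_0_1)) as [d1 Hd1].
  (* Below [d2], [w0 n t > 1]; below [min d1 1], [w t < t < 1]. *)
  set (d2 := exp ((ln c - 1) / 2)).
  exists (Rmin d1 (Rmin 1 d2)). split.
  { repeat apply Rmin_glb_lt; try lra; [apply cond_pos | apply exp_pos]. }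
  intros t [Ht Htd].
  pose proof (Rmin_l d1 (Rmin 1 d2)). pose proof (Rmin_r d1 (Rmin 1 d2)).
  pose proof (Rmin_l 1 d2). pose proof (Rmin_r 1 d2).
  assert (Hquot : Rabs (w t / t) < 1).
  { assert (Hball : ball 0 d1 t).
    { apply Rabs_def1; simpl; unfold minus, plus, opp; simpl; lra. }
    specialize (Hd1 t Hball Ht). revert Hd1.
    unfold ball; simpl; unfold AbsRing_ball, abs, minus, plus, opp; simpl.
    rewrite Rminus_0_r, Ropp_0, Rplus_0_r. tauto. }
  assert (Hwt : w t < t).
  { replace (w t) with (w t / t * t) by (field; lra).
    pose proof (Rle_abs (w t / t)). nra. }
  assert (Hln : ln t < (ln c - 1) / 2).
  { rewrite <- (ln_exp ((ln c - 1) / 2)). apply ln_increasing; fold d2; lra. }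
  unfold w0. fold c. lra.
Qed.

Lemma energy_nondecreasing s t : 0 < s -> s <= t -> energy s <= energy t.
Proof.
  apply (nondecreasing_after_of_derive_nonneg energy
           (fun t => 2 * (INR n - 2) * t ^ (2 * n - 3) * potential t) 0).
  - exact is_derive_energy.
  - intros x Hx. pose proof (le_INR _ _ n_ge3) as Hn. simpl in Hn.
    pose proof (pow_lt x (2 * n - 3) Hx). pose proof (potential_nonneg x Hx).
    apply Rmult_le_pos; [apply Rmult_le_pos |]; lra.
Qed.

Lemma no_double_zero a : 0 < a -> phi a = 0 -> dphi a <> 0.
Proof.
  intros Ha Hphi Hdphi.
  assert (Hea : energy a = 0).
  { unfold energy. rewrite Hdphi, potential_eq, Hphi, exp_0 by exact Ha. field. lra. }
  destruct w_lt_w0_near_0 as [d [Hd Hlt]].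
  set (t := Rmin d a / 2).
  assert (Ht : 0 < t < d /\ t <= a).
  { pose proof (Rmin_l d a). pose proof (Rmin_r d a).
    pose proof (Rmin_glb_lt d a 0 Hd Ha). unfold t. lra. }
  assert (Hpot : 0 < potential t).
  { apply potential_pos; [lra |]. unfold phi. pose proof (Hlt t (proj1 Ht)). lra. }
  pose proof (energy_nondecreasing t a ltac:(lra) (proj2 Ht)) as Hle.
  rewrite Hea in Hle. unfold energy in Hle.
  pose proof (pow_lt t (2 * n - 2) ltac:(lra)).
  pose proof (pow2_ge_0 (dphi t)). nra.
Qed.

Lemma phi_zero_isolated x : 0 < x -> isolated_in (fun y => phi y = 0) x.
Proof.
  intros Hx. apply is_derive_isolated_zero with (dphi x).
  - exact (is_derive_phi x Hx).
  - exact (no_double_zero x Hx).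
Qed.

Lemma intersections_finite_below b :
  exists l, forall y, intersections n w y -> y <= b -> In y l.
Proof.
  destruct w_lt_w0_near_0 as [d [Hd Hlt]].
  apply (finite_below_of_isolated _ d).
  - intros y [Hy Heq]. apply Rnot_lt_le. intros Hyd.
    pose proof (Hlt y (conj Hy Hyd)). lra.
  - intros x Hx. destruct (phi_zero_isolated x ltac:(lra)) as [eps [Heps Hiso]].
    exists eps. split; [exact Heps |]. intros y Hy [_ Heq].
    apply Hiso; [exact Hy | unfold phi; lra].
Qed.

Lemma phi_monotone_of_lam_one_sign T : 0 < T ->
  (forall s, T < s -> 0 <= Derive (lam w) s) \/
  (forall s, T < s -> Derive (lam w) s <= 0) ->
  monotone_after T phi.
Proof.
  intros HT Hsign. apply (monotone_after_of_derive_sign phi dphi).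
  - intros x Hx. apply is_derive_phi. lra.
  - assert (Hlam' : forall s, T < s -> Derive (lam w) s = lam w s * dphi s)
      by (intros s Hs; apply is_derive_unique, is_derive_lam; lra).
    destruct Hsign as [H | H]; [left | right]; intros s Hs;
      pose proof (H s Hs); pose proof (lam_pos s ltac:(lra));
      rewrite Hlam' in * by exact Hs; nra.
Qed.

Lemma lam_monotone_of_phi_one_sign T : 0 < T ->
  (forall t, T < t -> 0 < Derive phi t) \/ (forall t, T < t -> Derive phi t < 0) ->
  monotone_after T (lam w).
Proof.
  intros HT Hsign.
  apply (monotone_after_of_derive_sign (lam w) (fun t => lam w t * dphi t)).
  - intros x Hx. apply is_derive_lam. lra.
  - assert (Hphi' : forall t, T < t -> Derive phi t = dphi t)
      by (intros t Ht; apply is_derive_unique, is_derive_phi; lra).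
    destruct Hsign as [H | H]; [left | right]; intros t Ht;
      pose proof (H t Ht); pose proof (lam_pos t ltac:(lra));
      rewrite Hphi' in * by exact Ht; nra.
Qed.

Lemma intersections_finite_of_lam_one_sign T :
  (forall s, T < s -> 0 <= Derive (lam w) s) \/
  (forall s, T < s -> Derive (lam w) s <= 0) ->
  finite_set (intersections n w).
Proof.
  intros Hsign. set (T' := Rmax T 1).
  assert (HT' : T <= T' /\ 1 <= T') by (split; [apply Rmax_l | apply Rmax_r]).
  assert (Hmono : monotone_after T' phi).
  { apply phi_monotone_of_lam_one_sign; [lra |].
    destruct Hsign as [H | H]; [left | right]; intros s Hs; apply H; lra. }
  destruct (monotone_after_isolated_zeros_finite phi T' Hmono) as [l2 Hl2].
  { intros x Hx. apply phi_zero_isolated. lra. }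
  destruct (intersections_finite_below T') as [l1 Hl1].
  exists (l1 ++ l2). intros y [Hy Heq]. apply in_or_app.
  destruct (Rle_dec y T') as [Hle | Hgt].
  - left. apply Hl1; [split |]; assumption.
  - right. apply Hl2; [lra | unfold phi; lra].
Qed.

End Gelfand.

Theorem lemma3p1 (n : nat) (w : R -> R) :
  (3 <= n)%nat ->
  gelfand_solution n w ->
  (* (i) infinitely many intersections => lambda' changes sign infinitely often *)
  (~ finite_set (intersections n w) ->
     forall T : R, exists s1 s2 : R,
       T < s1 /\ T < s2 /\
       Derive (lam w) s1 < 0 /\ 0 < Derive (lam w) s2) /\
  (* (ii) finitely many intersections, T after the last one, (w-w0)' of one sign
     on (T,oo) => lambda monotone on (T,oo) *)
  (forall T : R,
     finite_set (intersections n w) ->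
     0 < T ->
     (forall t, intersections n w t -> t < T) ->
     ((forall t, T < t -> 0 < Derive (fun s => w s - w0 n s) t) \/
      (forall t, T < t -> Derive (fun s => w s - w0 n s) t < 0)) ->
     ((forall s t, T < s -> s <= t -> lam w s <= lam w t) \/
      (forall s t, T < s -> s <= t -> lam w t <= lam w s))).
Proof.
  intros Hn Hw. split.
  - intros Hinf T. apply NNPP. intros Hno. apply Hinf.
    apply (intersections_finite_of_lam_one_sign n w Hn Hw T).
    exact (one_sign_of_no_sign_change _ T Hno).
  - intros T _ HT _ Hsign.
    exact (lam_monotone_of_phi_one_sign n w Hw T HT Hsign).
Qed.
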